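(* Let $d$ be an integer and let $b=(b_1,\ldots,b_n)$, $\alpha=(\alpha_1,\ldots,\alpha_n)$, $\beta=(\beta_1,\ldots,\beta_n)$ be vectors of nonnegative integers with $\alpha_1\le\cdots\le\alpha_n=d$, $\beta_1\le\cdots\le\beta_n=d$, $\alpha_i\le\beta_i$ for all $i$, $\alpha_1=0$ and $\beta_1=b_1$. Then the system $$0\le u_i\le b_i\ (i=1,\ldots,n),\qquad \alpha_i\le u_1+\cdots+u_i\le\beta_i\ (i=1,\ldots,n)$$ has an integral solution $u=(u_1,\ldots,u_n)$ if and only if $\beta_i+b_{i+1}+\cdots+b_j\ge\alpha_j$ for every pair $i,j$ with $1\le i\le j\le n$. *)

From mathcomp Require Import all_boot.
Set Implicit Arguments. Unset Strict Implicit. Unset Printing Implicit Defensive.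
(* Vectors of length n are encoded as functions nat -> nat, read at indices 1..n. *)

From mathcomp Require Import all_boot.
From mathcomp Require Import zify.

(* Necessity: on (i, j] the prefix sum of u grows by at most b_(i+1) + ... + b_j.
   Sufficiency: fill greedily, S_j = min (beta_j, S_(j-1) + b_j) with S_0 = 0, and
   take u_j = S_j - S_(j-1).  Then u_j <= b_j and S_j <= beta_j by construction,
   S is nondecreasing because beta is, and the last time the minimum was attained
   by beta gives S_j = beta_i + b_(i+1) + ... + b_j >= alpha_j for some i <= j. *)

Fixpoint greedy_prefix (b beta : nat -> nat) (j : nat) : nat :=
  if j is j'.+1 then minn (beta j) (greedy_prefix b beta j' + b j) else 0.

Lemma prefix_sum_le_bounded (u b : nat -> nat) (i j : nat) :
    i <= j -> (forall k, i < k <= j -> u k <= b k) ->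
  \sum_(1 <= k < j.+1) u k <= \sum_(1 <= k < i.+1) u k + \sum_(i.+1 <= k < j.+1) b k.
Proof.
move=> le_ij le_ub; rewrite (@big_cat_nat _ _ _ i.+1) //= leq_add2l.
rewrite big_nat_cond [leqRHS]big_nat_cond; apply: leq_sum => k.
by rewrite andbT => /andP[ik kj]; apply: le_ub; rewrite ik -ltnS.
Qed.

Section Greedy.

Context {b beta : nat -> nat}.
Local Notation S := (greedy_prefix b beta).

Lemma greedy_prefix_le_beta j : 0 < j -> S j <= beta j.
Proof. by case: j => // j _; rewrite geq_minl. Qed.

Lemma greedy_prefix_step_le j : S j.+1 <= S j + b j.+1.
Proof. exact: geq_minr. Qed.

Context {n : nat}.
Hypothesis beta_homo : forall i, 1 <= i -> i < n -> beta i <= beta i.+1.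

Lemma greedy_prefix_homo j : j < n -> S j <= S j.+1.
Proof.
move=> lt_jn; rewrite [leqRHS]/= leq_min leq_addr andbT.
case: j lt_jn => // j lt_jn.
exact: leq_trans (@greedy_prefix_le_beta j.+1 isT) (beta_homo j.+1 isT lt_jn).
Qed.

Lemma greedy_prefix_attained j : beta 1 <= b 1 -> 0 < j ->
  exists2 i, 1 <= i <= j & S j = beta i + \sum_(i.+1 <= k < j.+1) b k.
Proof.
move=> beta1_le; case: j => // j _; elim: j => [|j [i /andP[i_gt0 le_ij] S_j]].
  by exists 1 => //; rewrite big_geq //= add0n addn0; apply/minn_idPl.
have -> : S j.+2 = minn (beta j.+2) (S j.+1 + b j.+2) by [].
case: leqP => [_|_].
  by exists j.+2; rewrite ?leqnn // big_geq ?addn0.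
exists i; first by rewrite i_gt0 (leq_trans le_ij).
by rewrite S_j (@big_nat_recr _ _ _ j.+2) ?addnA.
Qed.

Lemma greedy_prefix_telescope i :
  i <= n -> \sum_(1 <= k < i.+1) (S k - S k.-1) = S i.
Proof.
move=> le_in; rewrite big_add1 /= telescope_sumn_in ?subn0 // => k.
by case/andP=> _ lt_ki; apply: greedy_prefix_homo (leq_trans lt_ki le_in).
Qed.

End Greedy.

Theorem lemma3p1 (n d : nat) (b alpha beta : nat -> nat)
  (hn : 0 < n)
  (halpha_mono : forall i, 1 <= i -> i < n -> alpha i <= alpha i.+1)
  (hbeta_mono : forall i, 1 <= i -> i < n -> beta i <= beta i.+1)
  (halpha_n : alpha n = d) (hbeta_n : beta n = d)
  (hab : forall i, 1 <= i <= n -> alpha i <= beta i)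
  (halpha1 : alpha 1 = 0) (hbeta1 : beta 1 = b 1) :
  (exists u : nat -> nat,
      (forall i, 1 <= i <= n -> u i <= b i) /\
      (forall i, 1 <= i <= n ->
         alpha i <= \sum_(1 <= k < i.+1) u k <= beta i))
  <->
  (forall i j, 1 <= i -> i <= j -> j <= n ->
      alpha j <= beta i + \sum_(i.+1 <= k < j.+1) b k).
Proof.
split=> [[u [le_ub sum_bounds]] i j i_gt0 le_ij le_jn|gap_bound].
  have /andP[le_alpha _] := sum_bounds j ltac:(lia).
  have /andP[_ le_beta] := sum_bounds i ltac:(lia).
  have le_sum : \sum_(1 <= k < j.+1) u k
      <= \sum_(1 <= k < i.+1) u k + \sum_(i.+1 <= k < j.+1) b k.
    by apply: prefix_sum_le_bounded => // k ?; apply: le_ub; lia.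
  by apply: leq_trans le_alpha (leq_trans le_sum _); rewrite leq_add2r.
set S := greedy_prefix b beta.
exists (fun k => S k - S k.-1); split=> [[|k] // _|i /andP[i_gt0 le_in]].
  by rewrite leq_subLR greedy_prefix_step_le.
rewrite (greedy_prefix_telescope hbeta_mono) // greedy_prefix_le_beta // andbT.
have [i' /andP[i'_gt0 le_i'i] ->] := greedy_prefix_attained _ (eq_leq hbeta1) i_gt0.
exact: gap_bound.
Qed.
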